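(* Let $\Phi_1,\Phi_2$ be two convex growth functions. Assume that $\Phi_2\in \mathscr{U}^q$ and that $\frac{\Phi_2}{\Phi_1}$ is nondecreasing. Then the function $\Phi_3$ defined by $\Phi_3(0)=0$ and $\Phi_3(t)=\dfrac{1}{\Phi_2\circ\Phi_1^{-1}\left(\frac 1t\right)}$ for $t>0$ belongs to the class $\mathscr{U}$.
   Context: A growth function is a continuous nondecreasing function from $[0,\infty)$ onto $[0,\infty)$; $\Phi^{-1}$ is its inverse. $\Phi$ is of upper type $q$ if there is $C>0$ with $\Phi(st)\le Ct^q\Phi(s)$ for all $s>0$, $t\ge1$. $\mathscr{U}^q$ ($q\ge1$) is the set of growth functions of upper type $q$ with $t\mapsto\Phi(t)/t$ nondecreasing, and $\mathscr{U}=\bigcup_{q\ge1}\mathscr{U}^q$. *)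

(* functions R -> R, only their values on [0,+oo) matter. *)
From Stdlib Require Export Reals.
Open Scope R_scope.

Definition growth_function (Phi : R -> R) : Prop :=
  (forall t, 0 <= t -> forall eps, 0 < eps -> exists delta, 0 < delta /\
      forall s, 0 <= s -> Rabs (s - t) < delta -> Rabs (Phi s - Phi t) < eps) /\
  (forall s t, 0 <= s -> s <= t -> Phi s <= Phi t) /\
  (forall t, 0 <= t -> 0 <= Phi t) /\
  (forall y, 0 <= y -> exists t, 0 <= t /\ Phi t = y).

Definition convex_on_nonneg (Phi : R -> R) : Prop :=
  forall x y l, 0 <= x -> 0 <= y -> 0 <= l <= 1 ->
    Phi (l * x + (1 - l) * y) <= l * Phi x + (1 - l) * Phi y.

Definition upper_type (q : R) (Phi : R -> R) : Prop :=
  exists C, 0 < C /\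
    forall s t, 0 < s -> 1 <= t -> Phi (s * t) <= C * Rpower t q * Phi s.

Definition quotient_t_nondecreasing (Phi : R -> R) : Prop :=
  forall s t, 0 < s -> s <= t -> Phi s / s <= Phi t / t.

Definition classU (q : R) (Phi : R -> R) : Prop :=
  1 <= q /\ growth_function Phi /\ upper_type q Phi /\ quotient_t_nondecreasing Phi.

Definition classU_all (Phi : R -> R) : Prop := exists q, classU q Phi.

(** For [t > 0] write [u t] for a point with [Phi1 (u t) = 1/t]; it decreases
    as [t] grows, and [Phi3 t = 1 / Phi2 (u t)].  Monotonicity, surjectivity
    and hence continuity of [Phi3] follow from those of [Phi1] and [Phi2].
    Convexity of [Phi1] gives [u s <= tau * u (s * tau)] for [tau >= 1], so the
    upper type of [Phi2] transfers to [Phi3] with the same exponent [q].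
    Finally [Phi3 t / t = Phi1 (u t) / Phi2 (u t)], which is nondecreasing
    because [u] is decreasing and [Phi2 / Phi1] is nondecreasing. *)

From Stdlib Require Import Reals Lra Psatz.
Open Scope R_scope.

Definition nondecreasing_nonneg (f : R -> R) : Prop :=
  forall s t, 0 <= s -> s <= t -> f s <= f t.

Lemma growth_function_nondecreasing {f} :
  growth_function f -> nondecreasing_nonneg f.
Proof. intros [_ [Hm _]]. exact Hm. Qed.

Lemma nondecreasing_lt_reflect {f a b} :
  nondecreasing_nonneg f -> 0 <= a -> 0 <= b -> f a < f b -> a < b.
Proof.
  intros Hm Ha Hb Hab.
  destruct (Rlt_or_le a b) as [Hlt|Hle]; [exact Hlt|].
  pose proof (Hm b a Hb Hle). lra.
Qed.

(** Surjectivity provides preimages of [f t - eps/2] and [f t + eps/2]; they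
    bound a neighbourhood of [t] on which [f] stays within [eps / 2]. *)
Lemma nondecreasing_onto_continuous f :
  nondecreasing_nonneg f ->
  (forall t, 0 <= t -> 0 <= f t) ->
  (forall y, 0 <= y -> exists t, 0 <= t /\ f t = y) ->
  forall t, 0 <= t -> forall eps, 0 < eps -> exists delta, 0 < delta /\
    forall s, 0 <= s -> Rabs (s - t) < delta -> Rabs (f s - f t) < eps.
Proof.
  intros Hm Hp Ho t Ht eps Heps.
  pose proof (Hp t Ht).
  destruct (Ho (f t + eps / 2)) as [b [Hb Hfb]]; [lra|].
  assert (Htb : t < b) by (apply (nondecreasing_lt_reflect Hm); lra).
  destruct (Rle_or_lt (f t - eps / 2) 0) as [Hlow|Hlow].
  - exists (b - t). split; [lra|].
    intros s Hs Hst. apply Rabs_def2 in Hst.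
    pose proof (Hm s b Hs ltac:(lra)). pose proof (Hp s Hs).
    apply Rabs_def1; lra.
  - destruct (Ho (f t - eps / 2)) as [a [Ha Hfa]]; [lra|].
    assert (Hat : a < t) by (apply (nondecreasing_lt_reflect Hm); lra).
    exists (Rmin (t - a) (b - t)). split; [apply Rmin_glb_lt; lra|].
    intros s Hs Hst. apply Rabs_def2 in Hst.
    pose proof (Rmin_l (t - a) (b - t)). pose proof (Rmin_r (t - a) (b - t)).
    pose proof (Hm s b Hs ltac:(lra)). pose proof (Hm a s Ha ltac:(lra)).
    apply Rabs_def1; lra.
Qed.

Lemma convex_chord_le {f} x y :
  convex_on_nonneg f -> f 0 = 0 -> 0 <= x <= y -> y * f x <= x * f y.
Proof.
  intros Hc Hf0 [Hx Hxy].
  destruct (Req_dec y 0) as [Hy0|Hy0].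
  { replace x with 0 by lra. subst y. lra. }
  assert (Hl : 0 <= x / y <= 1).
  { split; [apply Rmult_le_pos; [lra | left; apply Rinv_0_lt_compat; lra]|].
    apply Rmult_le_reg_r with y; [lra|]. field_simplify; lra. }
  pose proof (Hc y 0 (x / y) ltac:(lra) (Rle_refl 0) Hl) as Hconv.
  replace (x / y * y + (1 - x / y) * 0) with x in Hconv by (field; lra).
  rewrite Hf0, Rmult_0_r, Rplus_0_r in Hconv.
  apply Rmult_le_compat_l with (r := y) in Hconv; [|lra].
  replace (y * (x / y * f y)) with (x * f y) in Hconv by (field; lra).
  exact Hconv.
Qed.

Section GrowthFunction.

Context {f : R -> R} (Gf : growth_function f).

Lemma growth_function_0 : f 0 = 0.
Proof.
  destruct Gf as [_ [Hm [Hp Ho]]].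
  destruct (Ho 0 (Rle_refl 0)) as [t [Ht Hft]].
  pose proof (Hm 0 t (Rle_refl 0) Ht). pose proof (Hp 0 (Rle_refl 0)). lra.
Qed.

Lemma growth_function_preimage_pos {y} : 0 < y -> exists u, 0 < u /\ f u = y.
Proof.
  intros Hy. destruct Gf as [_ [_ [_ Ho]]].
  destruct (Ho y ltac:(lra)) as [u [[Hu|<-] Hfu]].
  - exists u. auto.
  - rewrite growth_function_0 in Hfu. lra.
Qed.

Lemma growth_function_upper_type_pos {q} :
  upper_type q f -> forall u, 0 < u -> 0 < f u.
Proof.
  intros [C [HC Hup]] u Hu.
  destruct Gf as [_ [Hm [Hp Ho]]].
  destruct (Rle_or_lt (f u) 0) as [Hle|]; [exfalso|assumption].
  assert (Hfu : f u = 0) by (pose proof (Hp u ltac:(lra)); lra).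
  destruct (Ho 1 ltac:(lra)) as [t1 [Ht1 Hft1]].
  assert (Hut : u < t1) by (apply (nondecreasing_lt_reflect Hm); lra).
  pose proof (Hup u (t1 / u) Hu) as Hbound.
  replace (u * (t1 / u)) with t1 in Hbound by (field; lra).
  rewrite Hfu, Rmult_0_r in Hbound.
  assert (1 <= t1 / u).
  { apply Rmult_le_reg_r with u; [lra|]. field_simplify; lra. }
  specialize (Hbound ltac:(assumption)). lra.
Qed.

End GrowthFunction.

(** If [f] vanished at some [u > 0], then [f s] could be made arbitrarily
    small at points [s >= u] where [g s >= g u > 0], so [g / f] would blow up
    near [u], contradicting its monotonicity. *)
Lemma ratio_nondecreasing_pos {f g} :
  growth_function f -> growth_function g -> (forall u, 0 < u -> 0 < g u) ->
  (forall s t, 0 < s -> s <= t -> 0 < f s -> g s / f s <= g t / f t) ->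
  forall u, 0 < u -> 0 < f u.
Proof.
  intros Gf Gg Hg Hratio u Hu.
  pose proof (growth_function_nondecreasing Gf) as Mf.
  pose proof (growth_function_nondecreasing Gg) as Mg.
  destruct Gf as [_ [_ [Pf Of]]].
  destruct (Rle_or_lt (f u) 0) as [Hle|]; [exfalso|assumption].
  assert (Hfu : f u = 0) by (pose proof (Pf u ltac:(lra)); lra).
  destruct (Of 1 ltac:(lra)) as [t1 [Ht1 Hft1]].
  assert (Hut : u < t1) by (apply (nondecreasing_lt_reflect Mf); lra).
  pose proof (Hg u Hu). pose proof (Hg t1 ltac:(lra)).
  pose proof (Mg u t1 ltac:(lra) ltac:(lra)).
  set (c := g u / (2 * g t1)).
  assert (Hc : c * (2 * g t1) = g u) by (unfold c; field; lra).
  assert (Hc_pos : 0 < c) by nra.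
  assert (Hc_half : c <= 1 / 2) by nra.
  destruct (Of c ltac:(lra)) as [s [Hs Hfs]].
  assert (Hus : u < s) by (apply (nondecreasing_lt_reflect Mf); lra).
  assert (Hst : s < t1) by (apply (nondecreasing_lt_reflect Mf); lra).
  pose proof (Hratio s t1 ltac:(lra) ltac:(lra) ltac:(lra)) as Hq.
  rewrite Hfs, Hft1, Rdiv_1_r in Hq.
  assert (Hgs : g s <= c * g t1).
  { replace (g s) with (g s / c * c) by (field; lra). nra. }
  pose proof (Mg u s ltac:(lra) ltac:(lra)). lra.
Qed.

Section Phi3.

Context {Phi1 Phi2 Phi3 : R -> R}.
Hypotheses (G1 : growth_function Phi1) (G2 : growth_function Phi2).
Hypothesis Phi2_pos : forall u, 0 < u -> 0 < Phi2 u.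
Hypothesis Phi3_0 : Phi3 0 = 0.
Hypothesis Phi3_def :
  forall t u, 0 < t -> 0 <= u -> Phi1 u = / t -> Phi3 t = / Phi2 u.

Lemma Phi3_preimage t :
  0 < t -> exists u, 0 < u /\ Phi1 u = / t /\ Phi3 t = / Phi2 u.
Proof.
  intros Ht.
  destruct (growth_function_preimage_pos G1 (Rinv_0_lt_compat t Ht))
    as [u [Hu Hfu]].
  exists u. split; [|split]; auto. apply Phi3_def; lra.
Qed.

Lemma preimage_inv_lt s t us ut :
  0 < s < t -> 0 <= us -> 0 <= ut -> Phi1 us = / s -> Phi1 ut = / t ->
  ut < us.
Proof.
  intros Hst Hus Hut Es Et.
  apply (nondecreasing_lt_reflect (growth_function_nondecreasing G1)); auto.
  rewrite Es, Et. apply Rinv_lt_contravar; nra.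
Qed.

Lemma Phi3_pos t : 0 < t -> 0 < Phi3 t.
Proof.
  intros Ht. destruct (Phi3_preimage t Ht) as [u [Hu [_ ->]]].
  apply Rinv_0_lt_compat, Phi2_pos, Hu.
Qed.

Lemma Phi3_nondecreasing : nondecreasing_nonneg Phi3.
Proof.
  intros s t Hs Hst.
  destruct (Req_dec s t) as [<-|Hne]; [lra|].
  destruct Hs as [Hs|<-].
  - destruct (Phi3_preimage s Hs) as [us [Hus [E1s ->]]].
    destruct (Phi3_preimage t ltac:(lra)) as [ut [Hut [E1t ->]]].
    apply Rinv_le_contravar; [apply Phi2_pos; exact Hut|].
    apply (growth_function_nondecreasing G2); [lra|].
    left. apply (preimage_inv_lt s t); lra.
  - rewrite Phi3_0. left. apply Phi3_pos. lra.
Qed.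

Lemma Phi3_onto (Phi1_pos : forall u, 0 < u -> 0 < Phi1 u) y :
  0 <= y -> exists t, 0 <= t /\ Phi3 t = y.
Proof.
  intros [Hy|<-]; [|exists 0; split; [lra | exact Phi3_0]].
  destruct (growth_function_preimage_pos G2 (Rinv_0_lt_compat y Hy))
    as [u [Hu Hfu]].
  pose proof (Phi1_pos u Hu).
  exists (/ Phi1 u). split; [left; apply Rinv_0_lt_compat; lra|].
  rewrite (Phi3_def (/ Phi1 u) u).
  - rewrite Hfu. apply Rinv_inv.
  - apply Rinv_0_lt_compat; lra.
  - lra.
  - rewrite Rinv_inv. reflexivity.
Qed.

Lemma Phi3_growth_function (Phi1_pos : forall u, 0 < u -> 0 < Phi1 u) :
  growth_function Phi3.
Proof.
  assert (P3 : forall t, 0 <= t -> 0 <= Phi3 t).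
  { intros t Ht. rewrite <- Phi3_0. apply Phi3_nondecreasing; lra. }
  split; [|split; [|split]].
  - apply nondecreasing_onto_continuous;
      [exact Phi3_nondecreasing | exact P3 | exact (Phi3_onto Phi1_pos)].
  - exact Phi3_nondecreasing.
  - exact P3.
  - exact (Phi3_onto Phi1_pos).
Qed.

Lemma Phi3_upper_type {q} :
  convex_on_nonneg Phi1 -> upper_type q Phi2 -> upper_type q Phi3.
Proof.
  intros C1 [C [HC Hup]]. exists C. split; [exact HC|].
  intros s tau Hs Htau.
  destruct (Phi3_preimage s Hs) as [us [Hus [E1s ->]]].
  destruct (Phi3_preimage (s * tau) ltac:(nra)) as [v [Hv [E1v ->]]].
  assert (Hscale : Phi1 v * tau = Phi1 us).
  { rewrite E1v, E1s. field. lra. }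
  assert (Hv1 : 0 < Phi1 v) by (rewrite E1v; apply Rinv_0_lt_compat; nra).
  (* otherwise convexity gives [Phi1 v <= (v / us) * Phi1 us < Phi1 us / tau = Phi1 v] *)
  assert (Hus_le : us <= v * tau).
  { destruct (Rle_or_lt us (v * tau)) as [Hle|Hgt]; [exact Hle|exfalso].
    pose proof (convex_chord_le v us C1 (growth_function_0 G1)
                  ltac:(split; nra)) as Hchord.
    nra. }
  pose proof (Hup v tau Hv Htau) as Hbound.
  pose proof (growth_function_nondecreasing G2 us (v * tau) ltac:(lra) Hus_le).
  pose proof (Phi2_pos us Hus). pose proof (Phi2_pos v Hv).
  assert (HK : 0 < C * Rpower tau q) by (apply Rmult_lt_0_compat; [exact HC | apply exp_pos]).
  set (K := C * Rpower tau q) in *.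
  replace (K * / Phi2 us) with (/ (Phi2 us / K)) by (field; lra).
  apply Rinv_le_contravar; [apply Rdiv_lt_0_compat; lra|].
  apply Rmult_le_reg_r with K; [exact HK|].
  field_simplify; lra.
Qed.

Lemma Phi3_quotient_nondecreasing :
  (forall s t, 0 < s -> s <= t -> 0 < Phi1 s -> Phi2 s / Phi1 s <= Phi2 t / Phi1 t) ->
  quotient_t_nondecreasing Phi3.
Proof.
  intros Hratio s t Hs Hst.
  destruct (Req_dec s t) as [<-|Hne]; [lra|].
  destruct (Phi3_preimage s Hs) as [us [Hus [E1s ->]]].
  destruct (Phi3_preimage t ltac:(lra)) as [ut [Hut [E1t ->]]].
  pose proof (preimage_inv_lt s t us ut ltac:(lra) ltac:(lra) ltac:(lra) E1s E1t).
  pose proof (Hratio ut us Hut ltac:(lra)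
                ltac:(rewrite E1t; apply Rinv_0_lt_compat; lra)) as Hq.
  rewrite E1t, E1s in Hq. unfold Rdiv in Hq. rewrite !Rinv_inv in Hq.
  pose proof (Phi2_pos ut Hut).
  unfold Rdiv. rewrite <- !Rinv_mult.
  apply Rinv_le_contravar; nra.
Qed.

End Phi3.

Theorem lemma3p2 (q : R) (Phi1 Phi2 Phi3 : R -> R) :
  growth_function Phi1 -> convex_on_nonneg Phi1 ->
  growth_function Phi2 -> convex_on_nonneg Phi2 ->
  classU q Phi2 ->
  (* Phi2 / Phi1 nondecreasing (where Phi1 > 0) *)
  (forall s t, 0 < s -> s <= t -> 0 < Phi1 s -> Phi2 s / Phi1 s <= Phi2 t / Phi1 t) ->
  (* Phi3(0) = 0 and Phi3(t) = 1 / Phi2(Phi1^{-1}(1/t)) for t > 0 *)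
  Phi3 0 = 0 ->
  (forall t u, 0 < t -> 0 <= u -> Phi1 u = / t -> Phi3 t = / Phi2 u) ->
  classU_all Phi3.
Proof.
  intros G1 C1 G2 _ [Hq [_ [UT2 _]]] Hratio H30 H3.
  pose proof (growth_function_upper_type_pos G2 UT2) as P2.
  pose proof (ratio_nondecreasing_pos G1 G2 P2 Hratio) as P1.
  exists q. split; [exact Hq|]. split; [|split].
  - exact (Phi3_growth_function G1 G2 P2 H30 H3 P1).
  - exact (Phi3_upper_type G1 G2 P2 H3 C1 UT2).
  - exact (Phi3_quotient_nondecreasing G1 P2 H3 Hratio).
Qed.
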